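(* Let $I_1>0$, $\delta\in\mathbb{R}$ and let $V:\mathbb{R}\to\mathbb{R}$ be smooth (in the paper $V(s)=c_1s+c_2s^2$). On $\mathbb{R}^4\times\mathbb{R}^3\ni(\bm{x},\bm{l})$ with the Poisson structure $B_+$ (defined in the context), consider \[ H=\frac{1}{2I_1}\big(l_x^2+l_y^2+l_z^2+\delta L_3^2\big)+V(x_0^2+x_3^2-x_1^2-x_2^2), \] \[ L_3=2l_x(-x_0x_2+x_1x_3)+2l_y(x_0x_1+x_2x_3)+l_z(x_0^2+x_3^2-x_1^2-x_2^2), \] and $l_z$. Then: (i) the functions $H$, $l_z$, $L_3$ pairwise Poisson commute with respect to $B_+$; (ii) the Hamiltonian vector field of $H$ satisfies \[ X_H=\frac{1}{2I_1}X_{\bm{l}^2}+\frac{\delta L_3}{I_1}X_{L_3}-\frac12\big(0,0,0,0,\ \bm{x}_+\nabla_{\bm{x}}V\big)^t, \] where $\bm{l}^2=l_x^2+l_y^2+l_z^2$ and $\nabla_{\bm{x}}V$ denotes the gradient with respect to $\bm{x}$ of $\bm{x}\mapsto V(x_0^2+x_3^2-x_1^2-x_2^2)$; (iii) the flows of $X_{l_z}$ and $X_{L_3}$ are periodic and commute, so they generate a (singular) $T^2$-action; (iv) restricted to $M=\{(\bm{x},\bm{l}):|\bm{x}|=1\}$, the vector fields $X_H$, $X_{L_3}$, $X_{l_z}$ are linearly independent on an open dense subset of $M$.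
   Context: For $\bm{x}=(x_0,x_1,x_2,x_3)\in\mathbb{R}^4$ define the $3\times4$ matrices \[ \bm{x}_\pm=\begin{pmatrix} x_1 & -x_0 & \mp x_3 & \pm x_2\\ x_2 & \pm x_3 & -x_0 & \mp x_1\\ x_3 & \mp x_2 & \pm x_1 & -x_0\end{pmatrix}. \] For $\bm{v}\in\mathbb{R}^3$ let $\hat{\bm{v}}$ be the $3\times 3$ skew matrix with $\hat{\bm{v}}\bm{u}=\bm{v}\times\bm{u}$. The Poisson structure $B_+$ on $\mathbb{R}^4\times\mathbb{R}^3$ is given by the $7\times7$ matrix \[ B_+=\begin{pmatrix}0 & \tfrac12\bm{x}_+^t\\ -\tfrac12\bm{x}_+ & -\hat{\bm{l}}\end{pmatrix}, \] i.e. $\{F,G\}=\nabla F^t B_+\nabla G$, and the Hamiltonian vector field of $F$ is $X_F=B_+\nabla F$, so that $\dot{\bm{x}}=\tfrac12\bm{x}_+^t\nabla_{\bm{l}}F$, $\dot{\bm{l}}=-\tfrac12\bm{x}_+\nabla_{\bm{x}}F-\bm{l}\times\nabla_{\bm{l}}F$. The function $|\bm{x}|^2$ is a Casimir. On $|\bm{x}|=1$, $R=\bm{x}_+\bm{x}_-^t\in SO(3)$ and $L_3=\bm{l}\cdot R\bm{e}_3$ with $\bm{e}_3=(0,0,1)^t$. *)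

From HB Require Import structures.
From mathcomp Require Import all_boot all_order all_algebra.
From mathcomp Require Import all_classical all_reals all_analysis.
Set Implicit Arguments. Unset Strict Implicit. Unset Printing Implicit Defensive.
Import Order.TTheory GRing.Theory Num.Theory.
Import numFieldNormedType.Exports.
Local Open Scope classical_set_scope.
Local Open Scope ring_scope.

Section Defs.
Variable R : realType.

(* A point (x, l) of R^4 x R^3 is a row vector p : 'rV[R]_7 with
   p = (x0, x1, x2, x3, lx, ly, lz). *)
Notation pt := 'rV[R]_7.

Definition x0 (p : pt) : R := p ord0 (@Ordinal 7 0 isT).
Definition x1 (p : pt) : R := p ord0 (@Ordinal 7 1 isT).
Definition x2 (p : pt) : R := p ord0 (@Ordinal 7 2 isT).
Definition x3 (p : pt) : R := p ord0 (@Ordinal 7 3 isT).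
Definition lx (p : pt) : R := p ord0 (@Ordinal 7 4 isT).
Definition ly (p : pt) : R := p ord0 (@Ordinal 7 5 isT).
Definition lz (p : pt) : R := p ord0 (@Ordinal 7 6 isT).

Definition xplus (p : pt) : 'M[R]_(3,4) :=
  \matrix_(i < 3, j < 4)
    (nth [::] [:: [:: x1 p; - x0 p; - x3 p; x2 p];
                  [:: x2 p; x3 p; - x0 p; - x1 p];
                  [:: x3 p; - x2 p; x1 p; - x0 p]] i)`_j.

(* skew matrix hat v, with (hat v) u = v x u *)
Definition hat (a b c : R) : 'M[R]_3 :=
  \matrix_(i < 3, j < 3)
    (nth [::] [:: [:: 0; - c; b];
                  [:: c; 0; - a];
                  [:: - b; a; 0]] i)`_j.

Definition Bplus (p : pt) : 'M[R]_7 :=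
  block_mx (0 : 'M[R]_(4, 4)) ((2:R)^-1 *: (xplus p)^T)
           (- ((2:R)^-1 *: xplus p)) (- hat (lx p) (ly p) (lz p)).

Definition grad (F : pt -> R) (p : pt) : pt :=
  \row_(i < 7) 'D_(delta_mx ord0 i) F p.

Definition pbracket (F G : pt -> R) (p : pt) : R :=
  (grad F p *m Bplus p *m (grad G p)^T) ord0 ord0.

Definition hamvf (F : pt -> R) (p : pt) : pt :=
  ((Bplus p) *m (grad F p)^T)^T.

Definition sfun (p : pt) : R := x0 p ^+ 2 + x3 p ^+ 2 - x1 p ^+ 2 - x2 p ^+ 2.

Definition L3 (p : pt) : R :=
  2 * lx p * (- x0 p * x2 p + x1 p * x3 p)
  + 2 * ly p * (x0 p * x1 p + x2 p * x3 p)
  + lz p * sfun p.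

Definition lsq (p : pt) : R := lx p ^+ 2 + ly p ^+ 2 + lz p ^+ 2.

Definition Ham (I1 delta : R) (V : R -> R) (p : pt) : R :=
  (2 * I1)^-1 * (lsq p + delta * L3 p ^+ 2) + V (sfun p).

Definition gradx (F : pt -> R) (p : pt) : 'cV[R]_4 :=
  \col_(j < 4) 'D_(delta_mx ord0 (lshift 3 j : 'I_7)) F p.

Definition Vterm (V : R -> R) (p : pt) : pt :=
  row_mx (0 : 'rV[R]_4) (xplus p *m gradx (V \o sfun) p)^T.

Definition smooth (V : R -> R) : Prop :=
  forall (n : nat) (s : R), derivable (derive1n n V) s 1.

Definition Mset : set pt :=
  [set p | x0 p ^+ 2 + x1 p ^+ 2 + x2 p ^+ 2 + x3 p ^+ 2 = 1].

Definition is_flow_on (S : set pt) (X : pt -> pt) (phi : R -> pt -> pt) : Prop :=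
  forall p, S p ->
    phi 0 p = p /\ forall t : R, is_derive t 1 (fun s => phi s p) (X (phi t p)).

Definition open_dense_in (S U : set pt) : Prop :=
  U `<=` S /\ (exists O : set pt, open O /\ U = O `&` S) /\ S `<=` closure U.

End Defs.

(* In coordinates the bracket is {F, G} = dF (X_G), and X_G is read off the gradient:
   x' = 1/2 x_+^t grad_l G and l' = -1/2 x_+ grad_x G - l x grad_l G.  Since H is built
   from l^2, L3^2 and V(sfun), (i) and (ii) reduce to a few polynomial identities.
   On |x| = 1 the fields X_{l_z} and X_{L3} are linear and skew, so their flows are
   explicit rotations (of x by the angle t/2, of l by t), hence 4 pi-periodic and commuting,
   and unique because skew fields preserve the distance between two integral curves.
   Finally x_+ x_+^t = |x|^2 I turns the x-part of X_F into 1/2 grad_l F, so X_H, X_L3, X_lz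
   are independent as soon as l, R e3, e3 are, i.e. off the zero set of the e3-component
   of l x R e3.  That set is closed, and its complement is dense in M: a small rotation
   of x moves R e3 off the poles +-e3, after which a small shift of l does the job. *)

From Pilot Require Import Defs.
From HB Require Import structures.
From mathcomp Require Import all_boot all_order all_algebra.
From mathcomp Require Import all_classical all_reals all_analysis.
From mathcomp Require Import ring lra.
Set Implicit Arguments. Unset Strict Implicit. Unset Printing Implicit Defensive.
Import Order.TTheory GRing.Theory Num.Theory.
Import numFieldNormedType.Exports.
Local Open Scope classical_set_scope.
Local Open Scope ring_scope.

Section Directional_derivatives.
Variables (R : realType) (U : normedModType R).

Lemma is_derive_mxcoord m n (p v : 'M[R]_(m, n)) i j :
  is_derive p v (fun q : 'M[R]_(m, n) => q i j) (v i j).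
Proof.
have @f : {linear 'M[R]_(m, n) -> R}.
  by exists (fun N : 'M[R]_(m, n) => N i j); do 2![eexists]; do ?[constructor];
     rewrite ?mxE// => ? *; rewrite ?mxE//; move=> ?; rewrite !mxE.
have f_cont : continuous f by exact: coord_continuous.
have -> : (fun q : 'M[R]_(m, n) => q i j) = f by [].
apply: DeriveDef; first exact/diff_derivable/linear_differentiable.
by rewrite deriveE ?diff_lin //; exact: linear_differentiable.
Qed.

Lemma derive_alongE (F : U -> R) p v :
  'D_v F p = 'D_1 (fun h : R => F (h *: v + p)) 0.
Proof.
rewrite /derive; set g1 := fun h => h^-1 *: _; set g2 := fun h => h^-1 *: _.
suff -> : g1 = g2 by [].
by rewrite funeqE /g1 /g2 => h /=; rewrite addr0 scale0r add0r [_%:A]mulr1.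
Qed.

Lemma is_derive_comp1 (f : U -> R) (g : R -> R) p v df :
  is_derive p v f df -> derivable g (f p) 1 ->
  is_derive p v (g \o f) ('D_1 g (f p) * df).
Proof.
move=> [fd <-] gd.
pose G := fun h : R => f (h *: v + p).
have G0 : G 0 = f p by rewrite /G scale0r add0r.
have dG : is_derive (0 : R) 1 G ('D_v f p).
  by apply: DeriveDef; [move/derivable1P: fd | rewrite derive_alongE].
have dg : is_derive (G 0) 1 g ('D_1 g (f p)) by rewrite G0; exact: derivableP.
have [dgG <-] := is_derive1_comp dg dG.
by apply: DeriveDef; [apply/derivable1P | rewrite derive_alongE].
Qed.

End Directional_derivatives.

Section Matrix_curves.
Variables (R : realType) (m n : nat).
Implicit Types Y : R -> 'M[R]_(m, n).

Lemma is_derive_mx_entry Y (t : R) (d : 'M[R]_(m, n)) i j :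
  is_derive t 1 Y d -> is_derive t 1 (fun s => Y s i j) (d i j).
Proof.
move=> [dY <-]; apply: DeriveDef; first by move/derivable_mxP: dY; apply.
by rewrite derive_mx // mxE.
Qed.

Lemma is_derive_mx_entries Y (t : R) (d : 'M[R]_(m, n)) :
  (forall i j, is_derive t 1 (fun s => Y s i j) (d i j)) -> is_derive t 1 Y d.
Proof.
move=> dY; have Yder : derivable Y t 1.
  by apply/derivable_mxP => i j; case: (dY i j).
apply: DeriveDef => //; rewrite derive_mx //.
by apply/matrixP => i j; rewrite mxE; case: (dY i j).
Qed.

End Matrix_curves.

Section Integral_curves.
Variables (R : realType) (n : nat).
Notation vec := 'rV[R]_n.

Definition dotr (u w : vec) : R := \sum_j u ord0 j * w ord0 j.

Lemma dotrDl (u w z : vec) : dotr (u + w) z = dotr u z + dotr w z.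
Proof. by rewrite /dotr -big_split; apply: eq_bigr => j _; rewrite mxE mulrDl. Qed.

Lemma dotrZl (a : R) (u z : vec) : dotr (a *: u) z = a * dotr u z.
Proof. by rewrite /dotr mulr_sumr; apply: eq_bigr => j _; rewrite mxE mulrA. Qed.

Lemma dotr_self_eq0 (u : vec) : dotr u u = 0 -> u = 0.
Proof.
move=> /psumr_eq0P u0; apply/rowP => j; rewrite mxE.
have /eqP : u ord0 j * u ord0 j = 0 by apply: u0 => // i _; rewrite -expr2 sqr_ge0.
by rewrite mulf_eq0 orbb => /eqP.
Qed.

Lemma is_derive_dotr_self (Y : R -> vec) (t : R) (dY : vec) :
  is_derive t 1 Y dY ->
  is_derive t 1 (fun s => dotr (Y s) (Y s)) (dotr (Y t) dY *+ 2).
Proof.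
move=> dYt.
have -> : (fun s => dotr (Y s) (Y s)) = \sum_j (fun s => Y s ord0 j * Y s ord0 j).
  by apply/funext => s; rewrite /dotr fct_sumE.
have dj j := is_deriveM (is_derive_mx_entry ord0 j dYt) (is_derive_mx_entry ord0 j dYt).
apply: is_derive_eq (is_derive_sum dj) _.
by rewrite /dotr -sumrMnl; apply: eq_bigr => j _; rewrite mulr2n -![_ *: _]/(_ * _) mulrC.
Qed.

Lemma integral_curves_unique (A : vec -> vec) (y z : R -> vec) :
  (forall u w, dotr (u - w) (A u - A w) = 0) ->
  (forall t : R, is_derive t 1 y (A (y t))) -> (forall t : R, is_derive t 1 z (A (z t))) ->
  y 0 = z 0 -> forall t : R, y t = z t.
Proof.
move=> A_skew dy dz yz0 t.
have d_dist (s : R) : is_derive s 1 (fun r => dotr (y r - z r) (y r - z r)) 0.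
  by have := is_derive_dotr_self (is_deriveB (dy s) (dz s)); rewrite A_skew mul0rn.
have := is_derive_0_is_cst t 0 d_dist.
rewrite yz0 subrr {2}/dotr big1 => [d0|j _]; last by rewrite mxE mul0r.
by apply/eqP; rewrite -subr_eq0; apply/eqP/dotr_self_eq0.
Qed.

End Integral_curves.

Section Block_matrices.
Variable R : pzRingType.

Lemma lsubmx_block_mul_tr m1 m2 (Aul : 'M[R]_(m1, m1)) (Aur : 'M[R]_(m1, m2))
    (Adl : 'M[R]_(m2, m1)) (Adr : 'M[R]_(m2, m2)) (g : 'rV[R]_(m1 + m2)) :
  lsubmx ((block_mx Aul Aur Adl Adr *m g^T)^T)
  = (Aul *m (lsubmx g)^T + Aur *m (rsubmx g)^T)^T.
Proof. by rewrite -[g]hsubmxK tr_row_mx mul_block_col tr_col_mx !row_mxKl !row_mxKr. Qed.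

End Block_matrices.

Lemma free_linear_preimage (K : fieldType) (vT wT : vectType K)
    (f : {linear vT -> wT}) (X : seq vT) :
  free (map f X) -> free X.
Proof.
rewrite /free size_map => /eqP fX; rewrite eqn_leq dim_span -fX /=.
have <- : map (linfun f) X = map f X by apply: eq_map => v; rewrite lfunE.
by rewrite -limg_span -[X in (_ <= X)%N](limg_ker_dim (linfun f)) leq_addl.
Qed.

Section Real_field_facts.
Variable R : realFieldType.

Lemma sqr_add_eq0 (a b : R) : a ^+ 2 + b ^+ 2 = 0 -> a = 0 /\ b = 0.
Proof.
move=> ab0; have a2 := sqr_ge0 a; have b2 := sqr_ge0 b.
have /eqP : a ^+ 2 = 0 by lra.
have /eqP : b ^+ 2 = 0 by lra.
by rewrite !sqrf_eq0 => /eqP -> /eqP ->.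
Qed.

Lemma rational_circle (d : R) : 0 < d < 1 ->
  let c := (1 - d ^+ 2) / (1 + d ^+ 2) in let s := 2 * d / (1 + d ^+ 2) in
  [/\ c ^+ 2 + s ^+ 2 = 1, 0 < c, 1 - c <= d & 0 < s <= 2 * d].
Proof.
move=> /andP[d_gt0 d_lt1] c s.
have den_gt0 : 0 < 1 + d ^+ 2 by rewrite ltr_pwDl ?sqr_ge0.
have cE : c * (1 + d ^+ 2) = 1 - d ^+ 2 by rewrite /c mulfVK ?gt_eqF.
have sE : s * (1 + d ^+ 2) = 2 * d by rewrite /s mulfVK ?gt_eqF.
rewrite !expr2 in den_gt0 cE sE *.
split.
- have : (c * c + s * s) * ((1 + d * d) * (1 + d * d)) = 1 * ((1 + d * d) * (1 + d * d)).
    have -> : (c * c + s * s) * ((1 + d * d) * (1 + d * d)) =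
      (c * (1 + d * d)) * (c * (1 + d * d)) + (s * (1 + d * d)) * (s * (1 + d * d)) by ring.
    by rewrite cE sE; ring.
  by move/mulIf; apply; rewrite mulf_neq0 ?gt_eqF.
- nra.
- nra.
- apply/andP; split; nra.
Qed.

Lemma free_rV3_of_det_xy (a K : R) (l w : 'rV[R]_3) : a != 0 ->
    l 0 0 * w 0 1 - l 0 1 * w 0 0 != 0 ->
  free [:: a *: (2 *: l + K *: w); w; delta_mx 0 2].
Proof.
move=> a0 lw0.
apply/(@freeP _ _ 3 [tuple a *: (2 *: l + K *: w); w; delta_mx 0 2]) => k.
rewrite !big_ord_recl big_ord0 addr0 => /rowP kE.
have := kE 0; have := kE 1; have := kE 2; rewrite !mxE /= => e2 e1 e0.
set k0 := k ord0 in e0 e1 e2 *; set k1 := k (lift ord0 ord0) in e0 e1 e2 *.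
set k2 := k (lift ord0 (lift ord0 ord0)) in e0 e1 e2 *.
have k0E : k0 = 0.
  have : k0 * (a * 2 * (l 0 0 * w 0 1 - l 0 1 * w 0 0)) = w 0 1 * 0 - w 0 0 * 0.
    by rewrite -{1}e0 -e1; ring.
  rewrite !mulr0 subrr => /eqP; rewrite !mulf_eq0 (negbTE a0) (negbTE lw0) pnatr_eq0.
  by rewrite /= !orbF => /eqP.
rewrite k0E !mul0r !add0r !mulr0 !addr0 in e0 e1 e2.
have k1E : k1 = 0.
  apply/eqP; apply: contraNT lw0 => k1_neq0.
  move/eqP: e0; rewrite mulf_eq0 (negbTE k1_neq0) => /eqP ->.
  by move/eqP: e1; rewrite mulf_eq0 (negbTE k1_neq0) => /eqP ->; rewrite !mulr0 subrr.
rewrite k1E mul0r add0r mulr1 in e2.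
case=> -[|[|[|//]]] Hi; [rewrite -k0E | rewrite -k1E | rewrite -e2];
  by congr k; apply: val_inj.
Qed.

End Real_field_facts.

Section Hamiltonian_system.
Variable R : realType.
Notation pt := 'rV[R]_7.
Implicit Types p v : pt.

Definition row7 (l : seq R) : pt := \row_(i < 7) l`_i.

Lemma ord7P (P : 'I_7 -> Prop) :
  P (@Ordinal 7 0 isT) -> P (@Ordinal 7 1 isT) -> P (@Ordinal 7 2 isT) ->
  P (@Ordinal 7 3 isT) -> P (@Ordinal 7 4 isT) -> P (@Ordinal 7 5 isT) ->
  P (@Ordinal 7 6 isT) -> forall i, P i.
Proof.
by move=> ? ? ? ? ? ? ? [[|[|[|[|[|[|[|//]]]]]]] Hi]; rewrite (eq_irrelevance Hi isT).
Qed.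

Ltac unfold_coords := rewrite /x0 /x1 /x2 /x3 /lx /ly /lz.
Ltac row7_entries := apply/rowP; apply: ord7P; rewrite !mxE /=.

Lemma ord7_lshift k (Hk : (k < 7)%N) (H4 : (k < 4)%N) :
  Ordinal Hk = lshift 3 (Ordinal H4).
Proof. exact: val_inj. Qed.

Lemma ord7_rshift k (Hk : (k < 7)%N) (H3 : (k - 4 < 3)%N) : (4 <= k)%N ->
  Ordinal Hk = rshift 4 (Ordinal H3).
Proof. by move=> k_ge4; apply: val_inj => /=; rewrite subnKC. Qed.

Definition xnorm2 p : R := x0 p ^+ 2 + x1 p ^+ 2 + x2 p ^+ 2 + x3 p ^+ 2.

(* [(Re3x p, Re3y p, sfun p)] is the third column [R e3] of [R = x_+ x_-^t], so that
   [L3 = l . R e3]. *)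
Definition Re3x p : R := 2 * (- x0 p * x2 p + x1 p * x3 p).
Definition Re3y p : R := 2 * (x0 p * x1 p + x2 p * x3 p).

Lemma is_derive_x0 p v : is_derive p v (@x0 R) (x0 v). Proof. exact: is_derive_mxcoord. Qed.
Lemma is_derive_x1 p v : is_derive p v (@x1 R) (x1 v). Proof. exact: is_derive_mxcoord. Qed.
Lemma is_derive_x2 p v : is_derive p v (@x2 R) (x2 v). Proof. exact: is_derive_mxcoord. Qed.
Lemma is_derive_x3 p v : is_derive p v (@x3 R) (x3 v). Proof. exact: is_derive_mxcoord. Qed.
Lemma is_derive_lx p v : is_derive p v (@lx R) (lx v). Proof. exact: is_derive_mxcoord. Qed.
Lemma is_derive_ly p v : is_derive p v (@ly R) (ly v). Proof. exact: is_derive_mxcoord. Qed.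
Lemma is_derive_lz p v : is_derive p v (@lz R) (lz v). Proof. exact: is_derive_mxcoord. Qed.

Definition dsfun (p v : pt) : R :=
  2 * (x0 p * x0 v + x3 p * x3 v - x1 p * x1 v - x2 p * x2 v).

Lemma is_derive_sfun p v : is_derive p v (@Defs.sfun R) (dsfun p v).
Proof.
apply: is_derive_eq (is_deriveB (is_deriveB (is_deriveD
  (is_deriveX 2 (is_derive_x0 p v)) (is_deriveX 2 (is_derive_x3 p v)))
  (is_deriveX 2 (is_derive_x1 p v))) (is_deriveX 2 (is_derive_x2 p v))) _.
by rewrite /dsfun /= -![_ *: _]/(_ * _) ?fctE; ring.
Qed.

Definition dL3 (p v : pt) : R :=
  2 * lx v * (- x0 p * x2 p + x1 p * x3 p)
  + 2 * lx p * (- x0 v * x2 p - x0 p * x2 v + x1 v * x3 p + x1 p * x3 v)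
  + 2 * ly v * (x0 p * x1 p + x2 p * x3 p)
  + 2 * ly p * (x0 v * x1 p + x0 p * x1 v + x2 v * x3 p + x2 p * x3 v)
  + lz v * Defs.sfun p + lz p * dsfun p v.

Lemma is_derive_L3 p v : is_derive p v (@L3 R) (dL3 p v).
Proof.
have d2 := is_derive_cst (2 : R) p v.
apply: is_derive_eq (is_deriveD (is_deriveD
  (is_deriveM (is_deriveM d2 (is_derive_lx p v))
     (is_deriveD (is_deriveM (is_deriveN (is_derive_x0 p v)) (is_derive_x2 p v))
                 (is_deriveM (is_derive_x1 p v) (is_derive_x3 p v))))
  (is_deriveM (is_deriveM d2 (is_derive_ly p v))
     (is_deriveD (is_deriveM (is_derive_x0 p v) (is_derive_x1 p v))
                 (is_deriveM (is_derive_x2 p v) (is_derive_x3 p v)))))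
  (is_deriveM (is_derive_lz p v) (is_derive_sfun p v))) _.
by rewrite /dL3 /= -![_ *: _]/(_ * _) ?fctE /cst /=; ring.
Qed.

Definition dlsq (p v : pt) : R := 2 * (lx p * lx v + ly p * ly v + lz p * lz v).

Lemma is_derive_lsq p v : is_derive p v (@lsq R) (dlsq p v).
Proof.
apply: is_derive_eq (is_deriveD (is_deriveD (is_deriveX 2 (is_derive_lx p v))
  (is_deriveX 2 (is_derive_ly p v))) (is_deriveX 2 (is_derive_lz p v))) _.
by rewrite /dlsq /= -![_ *: _]/(_ * _) ?fctE; ring.
Qed.

Lemma gradE (F : pt -> R) (dF : pt -> R) p :
  (forall v, is_derive p v F (dF v)) -> grad F p = \row_i dF (delta_mx ord0 i).
Proof. by move=> dFp; apply/rowP => i; rewrite !mxE derive_val. Qed.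

Lemma grad_lz p : grad (@lz R) p = row7 [:: 0; 0; 0; 0; 0; 0; 1].
Proof. by rewrite (gradE (is_derive_lz p)); row7_entries; rewrite /lz !mxE. Qed.

Lemma grad_lsq p :
  grad (@lsq R) p = row7 [:: 0; 0; 0; 0; 2 * lx p; 2 * ly p; 2 * lz p].
Proof.
rewrite (gradE (is_derive_lsq p)); row7_entries;
  rewrite /dlsq; unfold_coords; rewrite !mxE /=; ring.
Qed.

Lemma grad_L3 p : grad (@L3 R) p = row7
  [:: 2 * (- lx p * x2 p + ly p * x1 p + lz p * x0 p);
      2 * (lx p * x3 p + ly p * x0 p - lz p * x1 p);
      2 * (- lx p * x0 p + ly p * x3 p - lz p * x2 p);
      2 * (lx p * x1 p + ly p * x2 p + lz p * x3 p);
      2 * (- x0 p * x2 p + x1 p * x3 p);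
      2 * (x0 p * x1 p + x2 p * x3 p);
      Defs.sfun p].
Proof.
rewrite (gradE (is_derive_L3 p)); row7_entries;
  rewrite /dL3 /dsfun; unfold_coords; rewrite !mxE /=; ring.
Qed.

Definition Bmx p : 'M[R]_7 :=
  let h := (2 : R)^-1 in
  \matrix_(i < 7, j < 7)
   (nth [::] [::
     [:: 0; 0; 0; 0; h * x1 p; h * x2 p; h * x3 p];
     [:: 0; 0; 0; 0; - h * x0 p; h * x3 p; - h * x2 p];
     [:: 0; 0; 0; 0; - h * x3 p; - h * x0 p; h * x1 p];
     [:: 0; 0; 0; 0; h * x2 p; - h * x1 p; - h * x0 p];
     [:: - h * x1 p; h * x0 p; h * x3 p; - h * x2 p; 0; lz p; - ly p];
     [:: - h * x2 p; - h * x3 p; h * x0 p; h * x1 p; - lz p; 0; lx p];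
     [:: - h * x3 p; h * x2 p; - h * x1 p; h * x0 p; ly p; - lx p; 0]] i)`_j.

Lemma BplusE p : Bplus p = Bmx p.
Proof.
apply/matrixP => i j; rewrite /Bplus [RHS]mxE.
case: i => [[|[|[|[|[|[|[|//]]]]]]] Hi];
  rewrite ?(ord7_lshift Hi isT) ?(ord7_rshift Hi isT isT);
case: j => [[|[|[|[|[|[|[|//]]]]]]] Hj];
  rewrite ?(ord7_lshift Hj isT) ?(ord7_rshift Hj isT isT);
  rewrite !(mxE, unsplitK (inl _), unsplitK (inr _)) /=; unfold_coords; ring.
Qed.

Lemma hat_skew (a b c : R) : (hat a b c)^T = - hat a b c.
Proof.
apply/matrixP => i j; rewrite !mxE.
by case: i => [[|[|[|//]]] ?]; case: j => [[|[|[|//]]] ?]; rewrite /= ?opprK ?oppr0.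
Qed.

Lemma Bplus_skew p : (Bplus p)^T = - Bplus p.
Proof.
rewrite /Bplus (@tr_block_mx _ 4 3 4 3) (@opp_block_mx _ 4 3 4 3).
by rewrite !linearN /= !linearZ /= trmxK hat_skew trmx0 oppr0 !opprK.
Qed.

Lemma pbracketC (F G : pt -> R) p : pbracket F G p = - pbracket G F p.
Proof.
rewrite /pbracket -[in LHS](trmxK (_ *m _)) [in LHS]mxE !trmx_mul trmxK Bplus_skew.
by rewrite mulNmx mulmxN mulmxA; apply: mxE.
Qed.

Lemma pbracket_self (F : pt -> R) p : pbracket F F p = 0.
Proof. have := pbracketC F F p; lra. Qed.

Lemma grad_sfun p : grad (@Defs.sfun R) p =
  row7 [:: 2 * x0 p; - (2 * x1 p); - (2 * x2 p); 2 * x3 p; 0; 0; 0].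
Proof.
rewrite (gradE (is_derive_sfun p)); row7_entries;
  rewrite /dsfun; unfold_coords; rewrite !mxE /=; ring.
Qed.

Lemma hamvfE (F : pt -> R) p b0 b1 b2 b3 b4 b5 b6 :
  grad F p = row7 [:: b0; b1; b2; b3; b4; b5; b6] ->
  hamvf F p = row7
    [:: 2^-1 * (x1 p * b4 + x2 p * b5 + x3 p * b6);
        2^-1 * (- x0 p * b4 + x3 p * b5 - x2 p * b6);
        2^-1 * (- x3 p * b4 - x0 p * b5 + x1 p * b6);
        2^-1 * (x2 p * b4 - x1 p * b5 - x0 p * b6);
        - 2^-1 * (x1 p * b0 - x0 p * b1 - x3 p * b2 + x2 p * b3) - (ly p * b6 - lz p * b5);
        - 2^-1 * (x2 p * b0 + x3 p * b1 - x0 p * b2 - x1 p * b3) - (lz p * b4 - lx p * b6);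
        - 2^-1 * (x3 p * b0 - x2 p * b1 + x1 p * b2 - x0 p * b3) - (lx p * b5 - ly p * b4)].
Proof.
move=> gradF; rewrite /hamvf gradF BplusE.
by row7_entries; rewrite !big_ord_recr big_ord0 /= !mxE /=; unfold_coords; ring.
Qed.

Lemma hamvf_lz p : hamvf (@lz R) p =
  row7 [:: 2^-1 * x3 p; - (2^-1 * x2 p); 2^-1 * x1 p; - (2^-1 * x0 p); - ly p; lx p; 0].
Proof. by rewrite (hamvfE (grad_lz p)); row7_entries; ring. Qed.

Lemma hamvf_L3 p : hamvf (@L3 R) p =
  row7 [:: 2^-1 * xnorm2 p * x3 p; 2^-1 * xnorm2 p * x2 p; - (2^-1 * xnorm2 p * x1 p);
          - (2^-1 * xnorm2 p * x0 p); 0; 0; 0].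
Proof.
by rewrite (hamvfE (grad_L3 p)); row7_entries; rewrite /xnorm2 /Defs.sfun; field.
Qed.

Lemma hamvf_sfun p : hamvf (@Defs.sfun R) p =
  row7 [:: 0; 0; 0; 0; - Re3y p; Re3x p; 0].
Proof.
by rewrite (hamvfE (grad_sfun p)); row7_entries; rewrite /Re3x /Re3y; field.
Qed.

Lemma dotr7 (u w : pt) : dotr u w = x0 u * x0 w + x1 u * x1 w + x2 u * x2 w
  + x3 u * x3 w + lx u * lx w + ly u * ly w + lz u * lz w.
Proof.
rewrite /dotr !big_ord_recr big_ord0 /= add0r; unfold_coords.
by repeat congr (_ + _); congr (_ * _); congr (fun_of_matrix _ _ _); apply: val_inj.
Qed.

Lemma pbracket_hamvf (F G : pt -> R) p : pbracket F G p = dotr (grad F p) (hamvf G p).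
Proof.
by rewrite /pbracket /hamvf -mulmxA mxE; apply: eq_bigr => j _; rewrite [X in _ = _ * X]mxE.
Qed.

Lemma pbracket_with_lz p : [/\ pbracket (@lsq R) (@lz R) p = 0,
  pbracket (@L3 R) (@lz R) p = 0 & pbracket (@Defs.sfun R) (@lz R) p = 0].
Proof.
rewrite !pbracket_hamvf hamvf_lz grad_lsq grad_L3 grad_sfun.
by rewrite !dotr7; unfold_coords; rewrite !mxE /=; split; rewrite /Defs.sfun; field.
Qed.

Lemma pbracket_with_L3 p :
  pbracket (@lsq R) (@L3 R) p = 0 /\ pbracket (@Defs.sfun R) (@L3 R) p = 0.
Proof.
rewrite !pbracket_hamvf hamvf_L3 grad_lsq grad_sfun.
by rewrite !dotr7; unfold_coords; rewrite !mxE /=; split; field.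
Qed.

Lemma is_derive_harmonic (a b k t : R) :
  is_derive t 1 (fun s => a * cos (k * s) + b * sin (k * s))
    (k * (b * cos (k * t) - a * sin (k * t))).
Proof.
have dk : is_derive t 1 (fun s : R => k * s) k.
  by apply: is_derive_eq (is_deriveM (is_derive_cst k t 1) (is_derive_id t 1)) _;
     rewrite /cst /= -![_ *: _]/(_ * _); ring.
have dcos := is_derive1_comp (is_derive_cos (k * t)) dk.
have dsin := is_derive1_comp (is_derive_sin (k * t)) dk.
apply: is_derive_eq (is_deriveD (is_deriveM (is_derive_cst a t 1) dcos)
  (is_deriveM (is_derive_cst b t 1) dsin)) _.
by rewrite /cst /= -![_ *: _]/(_ * _); ring.
Qed.

Lemma is_derive_xnorm2 (Y : R -> pt) (t : R) (dY : pt) : is_derive t 1 Y dY ->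
  is_derive t 1 (fun s => xnorm2 (Y s))
    (2 * (x0 (Y t) * x0 dY + x1 (Y t) * x1 dY + x2 (Y t) * x2 dY + x3 (Y t) * x3 dY)).
Proof.
move=> dYt; have dsq j := is_deriveX 2 (is_derive_mx_entry ord0 j dYt).
apply: is_derive_eq (is_deriveD (is_deriveD (is_deriveD (dsq (@Ordinal 7 0 isT))
  (dsq (@Ordinal 7 1 isT))) (dsq (@Ordinal 7 2 isT))) (dsq (@Ordinal 7 3 isT))) _.
by rewrite /xnorm2; unfold_coords; rewrite /= -![_ *: _]/(_ * _); ring.
Qed.

Definition lz_flow p (t : R) : pt := row7
  [:: x0 p * cos (2^-1 * t) + x3 p * sin (2^-1 * t);
      x1 p * cos (2^-1 * t) + (- x2 p) * sin (2^-1 * t);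
      x2 p * cos (2^-1 * t) + x1 p * sin (2^-1 * t);
      x3 p * cos (2^-1 * t) + (- x0 p) * sin (2^-1 * t);
      lx p * cos (1 * t) + (- ly p) * sin (1 * t);
      ly p * cos (1 * t) + lx p * sin (1 * t);
      lz p].

Definition L3_flow p (t : R) : pt := row7
  [:: x0 p * cos (2^-1 * t) + x3 p * sin (2^-1 * t);
      x1 p * cos (2^-1 * t) + x2 p * sin (2^-1 * t);
      x2 p * cos (2^-1 * t) + (- x1 p) * sin (2^-1 * t);
      x3 p * cos (2^-1 * t) + (- x0 p) * sin (2^-1 * t);
      lx p; ly p; lz p].

Lemma lz_flow0 p : lz_flow p 0 = p.
Proof. by rewrite /lz_flow; row7_entries; rewrite ?mulr0 ?cos0 ?sin0; unfold_coords; ring. Qed.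

Lemma L3_flow0 p : L3_flow p 0 = p.
Proof. by rewrite /L3_flow; row7_entries; rewrite ?mulr0 ?cos0 ?sin0; unfold_coords; ring. Qed.

Lemma xnorm2_lz_flow p t : xnorm2 (lz_flow p t) = xnorm2 p.
Proof.
rewrite /xnorm2; unfold_coords; rewrite !mxE /=; unfold_coords.
by rewrite -[RHS]mulr1 -[X in _ = _ * X](cos2Dsin2 (2^-1 * t)); ring.
Qed.

Lemma xnorm2_L3_flow p t : xnorm2 (L3_flow p t) = xnorm2 p.
Proof.
rewrite /xnorm2; unfold_coords; rewrite !mxE /=; unfold_coords.
by rewrite -[RHS]mulr1 -[X in _ = _ * X](cos2Dsin2 (2^-1 * t)); ring.
Qed.

Lemma is_derive_row7 (L : R -> seq R) (t : R) (d : pt) :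
  (forall j : 'I_7, is_derive t 1 (fun s => (L s)`_j) (d ord0 j)) ->
  is_derive t 1 (fun s => row7 (L s)) d.
Proof.
move=> dL; apply: is_derive_mx_entries => i j; rewrite (ord1 i).
have -> : (fun s => row7 (L s) ord0 j) = (fun s => (L s)`_j).
  by apply/funext => s; rewrite mxE.
exact: dL.
Qed.

Ltac harmonic_entries t :=
  apply: is_derive_row7; apply: ord7P; rewrite !mxE /=;
  (apply: is_derive_eq (is_derive_harmonic _ _ _ t) _ ||
   apply: is_derive_eq (is_derive_cst _ t 1) _);
  unfold_coords; rewrite ?mxE /=; unfold_coords; ring.

Lemma lz_flow_is_flow p (t : R) :
  is_derive t 1 (lz_flow p) (hamvf (@lz R) (lz_flow p t)).
Proof. by rewrite hamvf_lz /lz_flow; harmonic_entries t. Qed.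

Lemma L3_flow_is_flow p (t : R) : xnorm2 p = 1 ->
  is_derive t 1 (L3_flow p) (hamvf (@L3 R) (L3_flow p t)).
Proof.
move=> p_unit; rewrite hamvf_L3 xnorm2_L3_flow p_unit mulr1 /L3_flow.
by harmonic_entries t.
Qed.

Lemma lz_flowE phi : is_flow_on (@Mset R) (hamvf (@lz R)) phi ->
  forall p, Mset p -> forall t, phi t p = lz_flow p t.
Proof.
move=> phi_flow p Mp; have [phi0 dphi] := phi_flow p Mp.
apply: (integral_curves_unique _ dphi (lz_flow_is_flow p)).
- by move=> u w; rewrite dotr7 !hamvf_lz; unfold_coords; rewrite !mxE /=; ring.
- by rewrite phi0 lz_flow0.
Qed.

Lemma L3_flowE psi : is_flow_on (@Mset R) (hamvf (@L3 R)) psi ->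
  forall p, Mset p -> forall t, psi t p = L3_flow p t.
Proof.
move=> psi_flow p Mp; have [psi0 dpsi] := psi_flow p Mp.
have xnorm2_psi (s : R) : xnorm2 (psi s p) = 1.
  have d_xnorm2 (r : R) : is_derive r 1 (fun r => xnorm2 (psi r p)) 0.
    apply: is_derive_eq (is_derive_xnorm2 (dpsi r)) _.
    by rewrite hamvf_L3; unfold_coords; rewrite !mxE /=; ring.
  by rewrite (is_derive_0_is_cst s 0 d_xnorm2) psi0.
(* X_L3 is xnorm2 times the linear skew field A, and xnorm2 stays 1 along the flow. *)
pose A q := row7 [:: 2^-1 * x3 q; 2^-1 * x2 q; - (2^-1 * x1 q); - (2^-1 * x0 q); 0; 0; 0].
have hamvf_L3_unit q : xnorm2 q = 1 -> hamvf (@L3 R) q = A q.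
  by move=> q_unit; rewrite hamvf_L3 q_unit mulr1.
apply: (integral_curves_unique (A := A)).
- by move=> u w; rewrite dotr7 /A; unfold_coords; rewrite !mxE /=; ring.
- by move=> s; rewrite -hamvf_L3_unit.
- move=> s; rewrite -hamvf_L3_unit ?xnorm2_L3_flow //.
  exact: L3_flow_is_flow.
- by rewrite psi0 L3_flow0.
Qed.

Lemma half_4pi : 2^-1 * (pi *+ 4) = pi *+ 2 :> R.
Proof. lra. Qed.

Lemma lz_flow_4pi p : lz_flow p (pi *+ 4) = p.
Proof.
have two_turns : 1 * (pi *+ 4) = pi *+ 2 + pi *+ 2 :> R by lra.
rewrite /lz_flow; row7_entries; rewrite ?half_4pi ?two_turns ?cosD2pi ?sinD2pi ?cos2pi ?sin2pi.
all: by unfold_coords; ring.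
Qed.

Lemma L3_flow_4pi p : L3_flow p (pi *+ 4) = p.
Proof.
by rewrite /L3_flow; row7_entries; rewrite ?half_4pi ?cos2pi ?sin2pi; unfold_coords; ring.
Qed.

Lemma lz_flow_L3_flowC p s t : lz_flow (L3_flow p t) s = L3_flow (lz_flow p s) t.
Proof. by rewrite /lz_flow /L3_flow; row7_entries; unfold_coords; rewrite !mxE /=; ring. Qed.

Lemma lz_L3_torus_action :
  (exists phi, is_flow_on (@Mset R) (hamvf (@lz R)) phi) /\
  (exists psi, is_flow_on (@Mset R) (hamvf (@L3 R)) psi) /\
  exists T1 T2 : R, 0 < T1 /\ 0 < T2 /\
    forall phi psi,
      is_flow_on (@Mset R) (hamvf (@lz R)) phi ->
      is_flow_on (@Mset R) (hamvf (@L3 R)) psi ->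
      (forall p, Mset p -> phi T1 p = p) /\
      (forall p, Mset p -> psi T2 p = p) /\
      (forall (s t : R) p, Mset p -> phi s (psi t p) = psi t (phi s p)).
Proof.
split; first by exists (fun t p => lz_flow p t) => p _; split;
  [exact: lz_flow0 | exact: lz_flow_is_flow].
split; first by exists (fun t p => L3_flow p t) => p Mp; split;
  [exact: L3_flow0 | move=> t; exact: L3_flow_is_flow].
have pi4_gt0 : 0 < pi *+ 4 :> R by rewrite pmulrn_rgt0 // pi_gt0.
exists (pi *+ 4), (pi *+ 4); do 2 split => //.
move=> phi psi phi_flow psi_flow; split; [|split].
- by move=> p Mp; rewrite (lz_flowE phi_flow Mp) lz_flow_4pi.
- by move=> p Mp; rewrite (L3_flowE psi_flow Mp) L3_flow_4pi.
- move=> s t p Mp.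
  have M_L3 : Mset (L3_flow p t) by rewrite /Mset /= -/(xnorm2 _) xnorm2_L3_flow.
  have M_lz : Mset (lz_flow p s) by rewrite /Mset /= -/(xnorm2 _) xnorm2_lz_flow.
  rewrite (L3_flowE psi_flow Mp) (lz_flowE phi_flow Mp) (lz_flowE phi_flow M_L3).
  by rewrite (L3_flowE psi_flow M_lz) lz_flow_L3_flowC.
Qed.

Definition xpart (v : pt) : 'rV[R]_4 := lsubmx (v : 'rV_(4 + 3)).
Definition lpart (v : pt) : 'rV[R]_3 := rsubmx (v : 'rV_(4 + 3)).

Lemma xpart_hamvf (F : pt -> R) p :
  xpart (hamvf F p) = 2^-1 *: lpart (grad F p) *m xplus p.
Proof.
rewrite /xpart /hamvf /Bplus (@lsubmx_block_mul_tr _ 4 3) mul0mx add0r -/(lpart _).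
by rewrite trmx_mul trmxK linearZ /= trmxK -scalemxAr scalemxAl.
Qed.

Lemma xplus_mul_tr p : xplus p *m (xplus p)^T = (xnorm2 p)%:M.
Proof.
apply/matrixP => i j; rewrite !mxE !big_ord_recr big_ord0 /= !mxE.
by case: i => [[|[|[|//]]] ?]; case: j => [[|[|[|//]]] ?]; rewrite /xnorm2 /=; ring.
Qed.

Lemma lpart_grad_lz p : lpart (grad (@lz R) p) = delta_mx 0 2.
Proof. by rewrite grad_lz; apply/rowP => -[[|[|[|//]]] ?]; rewrite !mxE. Qed.

Lemma lpart_grad_sfun p : lpart (grad (@Defs.sfun R) p) = 0.
Proof. by rewrite grad_sfun; apply/rowP => -[[|[|[|//]]] ?]; rewrite !mxE. Qed.

Definition lvec p : 'rV[R]_3 := \row_(j < 3) [:: lx p; ly p; lz p]`_j.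
Definition Re3 p : 'rV[R]_3 := \row_(j < 3) [:: Re3x p; Re3y p; Defs.sfun p]`_j.

Lemma lpart_grad_lsq p : lpart (grad (@lsq R) p) = 2 *: lvec p.
Proof. by rewrite grad_lsq; apply/rowP => -[[|[|[|//]]] ?]; rewrite !mxE. Qed.

Lemma lpart_grad_L3 p : lpart (grad (@L3 R) p) = Re3 p.
Proof. by rewrite grad_L3; apply/rowP => -[[|[|[|//]]] ?]; rewrite !mxE. Qed.

(* The e3-component of l x R e3. *)
Definition indep_det p : R := lx p * Re3y p - ly p * Re3x p.

Lemma open_indep_det : open [set q : pt | indep_det q != 0].
Proof.
have det_cont : continuous indep_det.
  move=> q; pose c k (Hk : (k < 7)%N) := @coord_continuous R 1 7 ord0 (Ordinal Hk) q.
  have c2 : {for q, continuous (fun _ : pt => 2 : R)} := @cst_continuous _ _ (2 : R) q.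
  exact: (continuousB (continuousM (c 4%N isT) (continuousM c2
      (continuousD (continuousM (c 0%N isT) (c 1%N isT)) (continuousM (c 2%N isT) (c 3%N isT)))))
    (continuousM (c 5%N isT) (continuousM c2
      (continuousD (continuousM (continuousN (c 0%N isT)) (c 2%N isT))
                   (continuousM (c 1%N isT) (c 3%N isT)))))).
have -> : [set q : pt | indep_det q != 0] = indep_det @^-1` [set y | y != 0] by [].
by apply: open_comp; [move=> q _; exact: det_cont | exact: open_neq].
Qed.

Lemma unit_coord_bound p : xnorm2 p = 1 ->
  [/\ -1 <= x0 p <= 1, -1 <= x1 p <= 1, -1 <= x2 p <= 1 & -1 <= x3 p <= 1].
Proof.
rewrite /xnorm2 => p_unit.
have := sqr_ge0 (x0 p); have := sqr_ge0 (x1 p); have := sqr_ge0 (x2 p).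
have := sqr_ge0 (x3 p); rewrite !expr2 in p_unit * => ? ? ? ?.
by split; apply/andP; split; nra.
Qed.

Lemma unit_Re3_bound p : xnorm2 p = 1 -> -1 <= Re3x p <= 1 /\ -1 <= Re3y p <= 1.
Proof.
rewrite /xnorm2 /Re3x /Re3y => p_unit.
have := sqr_ge0 (x0 p + x2 p); have := sqr_ge0 (x1 p - x3 p).
have := sqr_ge0 (x0 p - x2 p); have := sqr_ge0 (x1 p + x3 p).
have := sqr_ge0 (x0 p - x1 p); have := sqr_ge0 (x2 p - x3 p).
have := sqr_ge0 (x0 p + x1 p); have := sqr_ge0 (x2 p + x3 p).
rewrite !expr2 in p_unit * => ? ? ? ? ? ? ? ?.
by split; apply/andP; split; nra.
Qed.

(* Rotating x in the (x0, x1) and (x2, x3) planes moves R e3 off the poles +-e3,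
   where Re3x = Re3y = 0. *)
Definition rotx (c s : R) p : pt := row7
  [:: c * x0 p - s * x1 p; s * x0 p + c * x1 p; c * x2 p - s * x3 p;
      s * x2 p + c * x3 p; lx p; ly p; lz p].

Lemma xnorm2_rotx c s p : c ^+ 2 + s ^+ 2 = 1 -> xnorm2 (rotx c s p) = xnorm2 p.
Proof.
move=> cs1; rewrite /xnorm2 /rotx; unfold_coords; rewrite !mxE /=; unfold_coords.
by rewrite -[RHS]mulr1 -cs1; ring.
Qed.

Lemma Re3_rotx c s p : xnorm2 p = 1 -> c ^+ 2 + s ^+ 2 = 1 ->
  Re3x p ^+ 2 + Re3y p ^+ 2 = 0 ->
  Re3x (rotx c s p) ^+ 2 + Re3y (rotx c s p) ^+ 2 = 4 * (c * s) ^+ 2.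
Proof.
rewrite /xnorm2 /Re3x /Re3y /rotx; unfold_coords; rewrite !mxE /=; unfold_coords.
move: (p ord0 _) (p ord0 _) (p ord0 _) (p ord0 _) => f e b a p_unit cs1 pole.
(* a, b, e, f are x0, x1, x2, x3 *)
have uw0 : (a ^+ 2 + f ^+ 2) * (b ^+ 2 + e ^+ 2) = 0.
  have /eqP : 4 * ((a ^+ 2 + f ^+ 2) * (b ^+ 2 + e ^+ 2)) = 0 by rewrite -pole; ring.
  by rewrite mulf_eq0 pnatr_eq0 => /eqP.
have [k0 _] : a * b - e * f = 0 /\ a * e + b * f = 0.
  by apply: sqr_add_eq0; rewrite -uw0; ring.
pose u := a ^+ 2 + f ^+ 2; pose w := b ^+ 2 + e ^+ 2; pose k := a * b - e * f.
transitivity (4 * ((c * s) ^+ 2 * (a ^+ 2 + b ^+ 2 + e ^+ 2 + f ^+ 2) ^+ 2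
  + (c ^+ 2 - s ^+ 2) ^+ 2 * (u * w) + 2 * c * s * k * (c ^+ 2 - s ^+ 2) * (u - w)
  - 4 * (c * s) ^+ 2 * k ^+ 2)); first by rewrite /u /w /k; ring.
by rewrite p_unit /u /w uw0 /k k0; ring.
Qed.

Lemma approx_Re3_neq0 p (d : R) : xnorm2 p = 1 -> 0 < d < 1 ->
  exists q, [/\ xnorm2 q = 1, Re3x q ^+ 2 + Re3y q ^+ 2 != 0 &
    forall j, `|p ord0 j - q ord0 j| <= 3 * d].
Proof.
move=> p_unit d01; have d_gt0 := (andP d01).1.
have [pole|] := eqVneq (Re3x p ^+ 2 + Re3y p ^+ 2) 0; last first.
  by exists p; split => // j; rewrite subrr normr0 mulr_ge0 // ltW.
have [] := rational_circle d01.
set c := (1 - d ^+ 2) / _; set s := 2 * d / _ => cs1 c_gt0 c_near1 /andP[s_gt0 s_le].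
have c_le1 : c <= 1 by rewrite !expr2 in cs1; nra.
exists (rotx c s p); split; first by rewrite xnorm2_rotx.
  by rewrite Re3_rotx // mulf_neq0 ?pnatr_eq0 // sqrf_eq0 mulf_neq0 ?gt_eqF.
have [b0 b1 b2 b3] := unit_coord_bound p_unit.
move: b0 b1 b2 b3; rewrite /rotx; unfold_coords => b0 b1 b2 b3.
have l_entry (a : R) : `|a - a| <= 3 * d by rewrite subrr normr0 mulr_ge0 // ltW.
by apply: ord7P; rewrite !mxE /=; unfold_coords; rewrite ?l_entry //;
  rewrite ler_norml; apply/andP; split; nra.
Qed.

Lemma approx_indep_det p (e : R) : xnorm2 p = 1 -> 0 < e ->
  exists q, [/\ xnorm2 q = 1, indep_det q != 0 & forall j, `|p ord0 j - q ord0 j| < e].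
Proof.
move=> p_unit e_gt0.
have [d [d_gt0 d_lt1 de]] : exists d : R, [/\ 0 < d, d < 1 & 4 * d < e].
  by case: (lerP e 1) => e1; [exists (e / 8) | exists (8^-1)]; split; lra.
have d01 : 0 < d < 1 by rewrite d_gt0 d_lt1.
have [q1 [q1_unit q1_off_pole q1_near]] := approx_Re3_neq0 p_unit d01.
have [det1|] := eqVneq (indep_det q1) 0; last first.
  by exists q1; split => // j; apply: le_lt_trans (q1_near j) _; lra.
pose q := row7 [:: x0 q1; x1 q1; x2 q1; x3 q1;
                   lx q1 + d * Re3y q1; ly q1 - d * Re3x q1; lz q1].
have detE : indep_det q = indep_det q1 + d * (Re3x q1 ^+ 2 + Re3y q1 ^+ 2).
  by rewrite /q /indep_det /Re3x /Re3y; unfold_coords; rewrite !mxE /=; unfold_coords; ring.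
exists q; split.
- by rewrite /q /xnorm2; unfold_coords; rewrite !mxE /=; exact: q1_unit.
- by rewrite detE det1 add0r mulf_neq0 // gt_eqF.
have [/andP[Re3x_lo Re3x_hi] /andP[Re3y_lo Re3y_hi]] := unit_Re3_bound q1_unit.
move=> j; have := q1_near j; move: j; apply: ord7P; rewrite /q !mxE /=; unfold_coords;
  rewrite ler_norml ltr_norml => /andP[lo hi]; apply/andP; split; nra.
Qed.

Lemma open_dense_indep_det :
  open_dense_in (@Mset R) ([set q | indep_det q != 0] `&` @Mset R).
Proof.
split; first by move=> q [].
split; first by exists [set q | indep_det q != 0]; split; [exact: open_indep_det|].
move=> p Mp B /nbhs_ballP [e e_gt0 eB].
have [q [q_unit q_det q_near]] := approx_indep_det (Mp : xnorm2 p = 1) e_gt0.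
exists q; split; first by [].
apply: eB; rewrite -ball_normE /ball_ /Num.Def.normr /= mx_normrE.
by apply: bigmax_lt => // -[i j] _; rewrite !mxE (ord1 i); exact: q_near.
Qed.

Section Hamiltonian.
Variables (I1 delta : R) (V : R -> R).
Hypothesis V_derivable : forall s, derivable V s 1.

Lemma is_derive_Ham p v : is_derive p v (Ham I1 delta V)
  ((2 * I1)^-1 * (dlsq p v + 2 * delta * L3 p * dL3 p v)
   + 'D_1 V (Defs.sfun p) * dsfun p v).
Proof.
have dV : derivable V (Defs.sfun p) 1 := @V_derivable (Defs.sfun p).
have dVs := is_derive_comp1 (is_derive_sfun p v) dV.
apply: is_derive_eq (is_deriveD (is_deriveM (is_derive_cst ((2 * I1)^-1) p v)
   (is_deriveD (is_derive_lsq p v)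
      (is_deriveM (is_derive_cst delta p v) (is_deriveX 2 (is_derive_L3 p v))))) dVs) _.
by rewrite /= -![_ *: _]/(_ * _) ?fctE /cst /=; ring.
Qed.

Lemma grad_Ham p : grad (Ham I1 delta V) p =
  (2 * I1)^-1 *: (grad (@lsq R) p + (2 * delta * L3 p) *: grad (@L3 R) p)
  + 'D_1 V (Defs.sfun p) *: grad (@Defs.sfun R) p.
Proof.
rewrite (gradE (is_derive_Ham p)) (gradE (is_derive_lsq p)) (gradE (is_derive_L3 p)).
by rewrite (gradE (is_derive_sfun p)); apply/rowP => i; rewrite !mxE; ring.
Qed.

Lemma hamvf_Ham p : hamvf (Ham I1 delta V) p =
  (2 * I1)^-1 *: (hamvf (@lsq R) p + (2 * delta * L3 p) *: hamvf (@L3 R) p)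
  + 'D_1 V (Defs.sfun p) *: hamvf (@Defs.sfun R) p.
Proof.
rewrite /hamvf grad_Ham !(linearD, linearZ) /=.
by rewrite scalerDr !scalerA (mulrC (2 * I1)^-1).
Qed.

Lemma pbracket_Ham (G : pt -> R) p : pbracket (Ham I1 delta V) G p =
  (2 * I1)^-1 * (pbracket (@lsq R) G p + 2 * delta * L3 p * pbracket (@L3 R) G p)
  + 'D_1 V (Defs.sfun p) * pbracket (@Defs.sfun R) G p.
Proof. by rewrite !pbracket_hamvf grad_Ham !(dotrDl, dotrZl). Qed.

Lemma Ham_lz_L3_commute p : [/\ pbracket (Ham I1 delta V) (@lz R) p = 0,
  pbracket (Ham I1 delta V) (@L3 R) p = 0 & pbracket (@lz R) (@L3 R) p = 0].
Proof.
have [lsq_lz L3_lz sfun_lz] := pbracket_with_lz p.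
have [lsq_L3 sfun_L3] := pbracket_with_L3 p.
rewrite [pbracket (@lz R) _ p]pbracketC L3_lz !pbracket_Ham.
rewrite lsq_lz L3_lz sfun_lz lsq_L3 sfun_L3 pbracket_self.
by split; ring.
Qed.

Lemma gradx_Vs p : gradx (V \o @Defs.sfun R) p = 'D_1 V (Defs.sfun p) *:
  \col_(j < 4) [:: 2 * x0 p; - (2 * x1 p); - (2 * x2 p); 2 * x3 p]`_j.
Proof.
have dV : derivable V (Defs.sfun p) 1 := @V_derivable (Defs.sfun p).
apply/colP => j; rewrite !mxE.
have [_ ->] := is_derive_comp1 (is_derive_sfun p (delta_mx ord0 (lshift 3 j))) dV.
by case: j => [[|[|[|[|//]]]] Hj]; rewrite /dsfun; unfold_coords; rewrite !mxE /=; ring.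
Qed.

Lemma Vterm_hamvf_sfun p :
  Vterm V p = - (2 * 'D_1 V (Defs.sfun p)) *: hamvf (@Defs.sfun R) p.
Proof.
rewrite /Vterm gradx_Vs hamvf_sfun; apply/rowP.
case => [[|[|[|[|[|[|[|//]]]]]]] Hi];
  rewrite ?(ord7_lshift Hi isT) ?(ord7_rshift Hi isT isT);
  rewrite !(mxE, unsplitK (inl _), unsplitK (inr _)) /= ?big_ord_recr ?big_ord0 /= ?mxE /=;
  rewrite /Re3x /Re3y; unfold_coords; ring.
Qed.

Lemma hamvf_Ham_decomposition p : hamvf (Ham I1 delta V) p =
  (2 * I1)^-1 *: hamvf (@lsq R) p + (delta * L3 p / I1) *: hamvf (@L3 R) p
  - 2^-1 *: Vterm V p.
Proof.
rewrite hamvf_Ham Vterm_hamvf_sfun invfM; set i := I1^-1.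
by apply/rowP => j; rewrite !mxE; field.
Qed.

Lemma free_hamvf p : I1 != 0 -> xnorm2 p = 1 -> indep_det p != 0 ->
  free [:: hamvf (Ham I1 delta V) p; hamvf (@L3 R) p; hamvf (@lz R) p].
Proof.
move=> I1_neq0 p_unit det_neq0.
have projE F : xpart (hamvf F p) *m (2 *: (xplus p)^T) = lpart (grad F p).
  rewrite -scalemxAr xpart_hamvf -mulmxA xplus_mul_tr p_unit.
  by rewrite mulmx1 scalerA mulfV ?pnatr_eq0 // scale1r.
apply: (free_linear_preimage
  (f := @mulmxr R 1 4 3 (2 *: (xplus p)^T) \o @lsubmx R 1 4 3)) => /=.
rewrite -!/(xpart _) !projE.
rewrite grad_Ham /lpart !linearD !linearZ /= -!/(lpart _).
rewrite lpart_grad_lsq lpart_grad_L3 lpart_grad_sfun lpart_grad_lz scaler0 addr0.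
rewrite -scalerDr; apply: free_rV3_of_det_xy; first by rewrite invr_eq0 mulf_neq0 ?pnatr_eq0.
by move: det_neq0; rewrite /indep_det !mxE.
Qed.

End Hamiltonian.

End Hamiltonian_system.

Theorem theorem1 (R : realType) (I1 delta : R) (V : R -> R)
  (hI1 : 0 < I1) (hV : smooth V) :
  (* (i) H, l_z, L_3 pairwise Poisson commute w.r.t. B_+ *)
  (forall p : 'rV[R]_7,
      pbracket (Ham I1 delta V) (@lz R) p = 0 /\
      pbracket (Ham I1 delta V) (@L3 R) p = 0 /\
      pbracket (@lz R) (@L3 R) p = 0)
  /\
  (* (ii) decomposition of X_H *)
  (forall p : 'rV[R]_7,
      hamvf (Ham I1 delta V) p =
        (2 * I1)^-1 *: hamvf (@lsq R) p
        + (delta * L3 p / I1) *: hamvf (@L3 R) p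
        - (2 : R)^-1 *: Vterm V p)
  /\
  (* (iii) the flows of X_{l_z} and X_{L_3} (on M) exist, are periodic and commute *)
  ((exists phi, is_flow_on (@Mset R) (hamvf (@lz R)) phi) /\
   (exists psi, is_flow_on (@Mset R) (hamvf (@L3 R)) psi) /\
   exists T1 T2 : R, 0 < T1 /\ 0 < T2 /\
     forall phi psi,
       is_flow_on (@Mset R) (hamvf (@lz R)) phi ->
       is_flow_on (@Mset R) (hamvf (@L3 R)) psi ->
       (forall p, Mset p -> phi T1 p = p) /\
       (forall p, Mset p -> psi T2 p = p) /\
       (forall (s t : R) p, Mset p -> phi s (psi t p) = psi t (phi s p)))
  /\
  (* (iv) X_H, X_{L_3}, X_{l_z} linearly independent on an open dense subset of M *)
  (exists U : set 'rV[R]_7, open_dense_in (@Mset R) U /\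
     forall p, U p ->
       free [:: hamvf (Ham I1 delta V) p; hamvf (@L3 R) p; hamvf (@lz R) p]).
Proof.
have V_derivable : forall s : R, derivable V s 1 := hV 0%N.
split; first by move=> p; have [] := Ham_lz_L3_commute I1 delta V_derivable p.
split; first exact: hamvf_Ham_decomposition.
split; first exact: lz_L3_torus_action.
exists ([set q | indep_det q != 0] `&` @Mset R); split; first exact: open_dense_indep_det.
by move=> p [det_neq0 Mp]; apply: free_hamvf => //; rewrite gt_eqF.
Qed.
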